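(* Let $d\ge 0$ be an integer and $r,s\in(-1,\infty)$ with $r\neq0$ and $r+s=0$. Let $\alpha=-d-1$, $\beta=r$, $\gamma=\frac{r-d-1}{2}$, $\delta=-\frac{r+d}{2}-1$ (so $N=d$), and for $0\le i\le d$ let $R_i(y)$ be the Racah polynomial $$R_i(y)=\sum_{k=0}^{i}\frac{(-i)_k(i+\alpha+\beta+1)_k}{(\alpha+1)_k(\beta+\delta+1)_k(\gamma+1)_k\,k!}\prod_{l=0}^{k-1}\bigl(l(l+\gamma+\delta+1)-y\bigr).$$ Then: (a) for every $0\le i\le d$, $u_i(4y+d(d+1))=R_i(y)$ as polynomials in $y$; (b) for $0\le j\le d$ the points $\bar\theta_j:=4j(j+\gamma+\delta+1)+d(d+1)=(d-2j)(d-2j+1)$ satisfy $\bar\theta_j=\theta_{2j}$ if $0\le j\le\lfloor d/2\rfloor$ and $\bar\theta_j=\theta_{2(d-j)+1}$ if $\lfloor d/2\rfloor<j\le d$, so $\{\bar\theta_j\}_{j=0}^d=\{\theta_j\}_{j=0}^d$; (c) the Racah weights $\bar k^*_j$ satisfy $\bar k^*_j=k^*_{2j}$ if $0\le j\le\lfloor d/2\rfloor$ and $\bar k^*_j=k^*_{2(d-j)+1}$ if $\lfloor d/2\rfloor<j\le d$. In other words, the dual Hahn polynomials $u_0,\dots,u_d$ are also Racah polynomials, orthogonal on the same points $\theta_0,\dots,\theta_d$ with the same weights $k^*_0,\dots,k^*_d$.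
   Context: Write $(x)_i=x(x+1)\cdots(x+i-1)$, $(x)_0=1$, and ${}_3F_2\left(\genfrac..{0pt}{}{a_1,a_2,a_3}{b_1,b_2}\,\middle|\,1\right)=\sum_{n\ge0}\frac{(a_1)_n(a_2)_n(a_3)_n}{(b_1)_n(b_2)_n n!}$ (a terminating sum here). For $0\le i\le d$ put $\theta_i=(d-i)(d-i+r+s+1)$ (these are distinct). Let $u_0,\dots,u_d$ be the unique real polynomials of degree at most $d$ with $u_i(\theta_j)={}_3F_2\left(\genfrac..{0pt}{}{-i,-j,j-r-s-2d-1}{-s-d,-d}\,\middle|\,1\right)$ for $0\le i,j\le d$ (the dual Hahn polynomials). Put $b^*_i=\frac{(d-i)(i-d-s)(2d-2i+r+s+2)_i}{(2d-2i+r+s)_{i+1}}$ ($0\le i\le d-1$), $c^*_i=\frac{i(i-d-r-1)(d-i+r+s+1)_{d-i}}{(d-i+r+s+2)_{d-i+1}}$ ($1\le i\le d$), and $k^*_i=\frac{b^*_0\cdots b^*_{i-1}}{c^*_1\cdots c^*_i}$ ($0\le i\le d$); the $u_i$ are orthogonal with respect to $\langle f,g\rangle=\sum_h f(\theta_h)g(\theta_h)k^*_h$. The Racah weights are defined by $\bar b^*_i=\frac{(d-i)(2d-2i+1)(d-2i-r-1)(d-2i-r)}{2(2d-4i-1)(2d-4i+1)}$ ($0\le i\le d-1$), $\bar c^*_i=\frac{i(2i-1)(d-2i+r+1)(d-2i+r+2)}{2(2d-4i+1)(2d-4i+3)}$ ($1\le i\le d$), and $\bar k^*_j=\frac{\bar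 b^*_0\cdots\bar b^*_{j-1}}{\bar c^*_1\cdots\bar c^*_j}$ ($0\le j\le d$). *)

From HB Require Import structures.
From mathcomp Require Import all_boot all_order all_algebra.
From mathcomp Require Import reals.
Set Implicit Arguments. Unset Strict Implicit. Unset Printing Implicit Defensive.
Import Order.TTheory GRing.Theory Num.Theory.
Local Open Scope ring_scope.

Section Defs.
Variable R : realType.

Definition rfact (x : R) (n : nat) : R := \prod_(k < n) (x + k%:R).

Definition theta (d : nat) (r s : R) (i : nat) : R :=
  (d%:R - i%:R) * (d%:R - i%:R + r + s + 1).

(* the terminating 3F2(-i,-j,j-r-s-2d-1; -s-d,-d; 1); terms with n > i vanish *)
Definition dualHahnF (d : nat) (r s : R) (i j : nat) : R :=
  \sum_(n < i.+1)
    (rfact (- i%:R) n * rfact (- j%:R) n * rfact (j%:R - r - s - 2 * d%:R - 1) n)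
    / (rfact (- s - d%:R) n * rfact (- d%:R) n * (n`!)%:R).

Definition bstar (d : nat) (r s : R) (i : nat) : R :=
  (d%:R - i%:R) * (i%:R - d%:R - s) * rfact (2 * d%:R - 2 * i%:R + r + s + 2) i
  / rfact (2 * d%:R - 2 * i%:R + r + s) i.+1.

Definition cstar (d : nat) (r s : R) (i : nat) : R :=
  i%:R * (i%:R - d%:R - r - 1) * rfact (d%:R - i%:R + r + s + 1) (d - i)
  / rfact (d%:R - i%:R + r + s + 2) (d - i).+1.

Definition kstar (d : nat) (r s : R) (i : nat) : R :=
  (\prod_(m < i) bstar d r s m) / (\prod_(m < i) cstar d r s m.+1).

Definition bbar (d : nat) (r : R) (i : nat) : R :=
  (d%:R - i%:R) * (2 * d%:R - 2 * i%:R + 1) * (d%:R - 2 * i%:R - r - 1) * (d%:R - 2 * i%:R - r)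
  / (2 * (2 * d%:R - 4 * i%:R - 1) * (2 * d%:R - 4 * i%:R + 1)).

Definition cbar (d : nat) (r : R) (i : nat) : R :=
  i%:R * (2 * i%:R - 1) * (d%:R - 2 * i%:R + r + 1) * (d%:R - 2 * i%:R + r + 2)
  / (2 * (2 * d%:R - 4 * i%:R + 1) * (2 * d%:R - 4 * i%:R + 3)).

Definition kbar (d : nat) (r : R) (j : nat) : R :=
  (\prod_(m < j) bbar d r m) / (\prod_(m < j) cbar d r m.+1).

Definition racahPoly (al be ga de : R) (i : nat) : {poly R} :=
  \sum_(k < i.+1)
    ((rfact (- i%:R) k * rfact (i%:R + al + be + 1) k)
      / (rfact (al + 1) k * rfact (be + de + 1) k * rfact (ga + 1) k * (k`!)%:R))
    *: \prod_(l < k) ((l%:R * (l%:R + ga + de + 1))%:P - 'X).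

End Defs.

(* Take s = -r and write a point of the spectrum as theta = 4 y + d(d+1).
   The 3F2 defining u_i(theta_j) is then a Newton series
   sum_n a_(i,n) prod_(k<n) (k(k-2d-1) - 4 y_j), and R_i(y) is a Newton series
   sum_n b_(i,n) prod_(l<n) (l(l-d-1/2) - y).  Contiguous relations between the
   coefficients show that both families satisfy the three-term recurrence
     A_i f_(i+1) = (4 y + A_i + C_i) f_i - C_i f_(i-1),
     A_i = (i+r-d)(i-d),  C_i = i(i+r),
   whose leading coefficient A_i is nonzero for i < d as r is not an integer; with
   f_0 = 1 they coincide.  Hence u_i(4y + d(d+1)) - R_i(y), of degree at most d,
   vanishes at the d+1 distinct points y_j, which is (a).  Part (b) is
   theta_i = (d-i)(d-i+1) and thetabar_j = (d-2j)(d-2j+1), and in (c) both weight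
   sequences are compared through their consecutive ratios b/c, which are explicit
   rational functions of the index, d and r. *)

From HB Require Import structures.
From mathcomp Require Import all_boot all_order all_algebra.
From mathcomp Require Import reals.
From mathcomp Require Import ring lra zify.
Import Order.TTheory GRing.Theory Num.Theory.
Local Open Scope ring_scope.

Set Implicit Arguments. Unset Strict Implicit. Unset Printing Implicit Defensive.

Section RisingFactorial.
Variable R : realType.
Implicit Types (x : R) (n : nat).

Lemma rfact0 x : rfact x 0 = 1.
Proof. by rewrite /rfact big_ord0. Qed.

Lemma rfactS x n : rfact x n.+1 = rfact x n * (x + n%:R).
Proof. by rewrite /rfact big_ord_recr. Qed.

Lemma rfactSl x n : rfact x n.+1 = x * rfact (x + 1) n.
Proof.
rewrite /rfact big_ord_recl addr0; congr (_ * _); apply: eq_bigr => k _.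
by rewrite /bump /= natrD addrA.
Qed.

Lemma rfact_shiftS x n :
  x * rfact (x + 1) n.+1 = rfact x n * (x + n%:R) * (x + n%:R + 1).
Proof. by rewrite -rfactSl !rfactS -natr1; ring. Qed.

Lemma rfact_shift2 x n :
  x * (x + 1) * rfact (x + 2) n = rfact x n.+1 * (x + n.+1%:R).
Proof. by rewrite -rfactS !rfactSl -addrA -mulrA. Qed.

Lemma rfact_eq0 x k n : (k < n)%N -> x + k%:R = 0 -> rfact x n = 0.
Proof. by move=> lt_kn xk0; rewrite /rfact (bigD1 (Ordinal lt_kn)) //= xk0 mul0r. Qed.

Lemma rfact_oppn_eq0 i n : (i < n)%N -> rfact (- i%:R : R) n = 0.
Proof. by move=> lt_in; apply: (rfact_eq0 lt_in); rewrite addNr. Qed.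

Lemma rfact_neq0 x n : (forall k, (k < n)%N -> x + k%:R != 0) -> rfact x n != 0.
Proof. by move=> xk_neq0; apply/prodf_neq0 => k _; apply: xk_neq0. Qed.

Lemma rfact_oppnS i n : rfact (- i.+1%:R : R) n.+1 = - i.+1%:R * rfact (- i%:R) n.
Proof. by rewrite rfactSl -natr1 opprD addrNK. Qed.

Lemma natr_rfact_oppn_pred i n :
  i%:R * rfact (- i.-1%:R : R) n = - rfact (- i%:R) n.+1.
Proof.
case: i => [|i]; first by rewrite mul0r rfact_oppn_eq0 ?oppr0.
by rewrite rfact_oppnS /= mulNr opprK.
Qed.

Lemma natr_fact_neq0 n : (n`!)%:R != 0 :> R.
Proof. by rewrite pnatr_eq0 -lt0n fact_gt0. Qed.

End RisingFactorial.

Section ThreeTermRecurrence.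
Variable F : fieldType.

Section NodeSeries.
Variables (nu : nat -> F) (M : nat).

Definition nodeProd (y : F) (n : nat) : F := \prod_(k < n) (nu k - y).

Definition nodeSeries (a : nat -> F) (y : F) : F :=
  \sum_(n < M.+1) a n * nodeProd y n.

Lemma nodeProdS y n : nodeProd y n.+1 = nodeProd y n * (nu n - y).
Proof. by rewrite /nodeProd big_ord_recr. Qed.

Lemma nodeSeries_const (a : nat -> F) y :
  a 0 = 1 -> (forall n, a n.+1 = 0) -> nodeSeries a y = 1.
Proof.
move=> a0 aS; rewrite /nodeSeries big_ord_recl big1 => [|n _].
  by rewrite a0 /nodeProd big_ord0 !mulr1 addr0.
by rewrite aS mul0r.
Qed.

Lemma nodeSeries_trunc (a : nat -> F) y i : (i <= M)%N ->
  (forall n, (i < n)%N -> a n = 0) ->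
  nodeSeries a y = \sum_(n < i.+1) a n * nodeProd y n.
Proof.
move=> le_iM a_gt_i; rewrite /nodeSeries.
rewrite [RHS](big_ord_widen M.+1 (fun n => a n * nodeProd y n)) //.
rewrite [RHS]big_mkcond; apply: eq_bigr => n _; case: ltnP => // le_in.
by rewrite a_gt_i ?mul0r.
Qed.

Lemma nodeSeries_three_term (a0 a1 a2 : nat -> F) (A C y : F) :
  a1 M = 0 ->
  A * a2 0 - (A + C) * a1 0 + C * a0 0 = nu 0 * a1 0 ->
  (forall m, (m < M)%N ->
     A * a2 m.+1 - (A + C) * a1 m.+1 + C * a0 m.+1 = nu m.+1 * a1 m.+1 - a1 m) ->
  y * nodeSeries a1 y
  = A * nodeSeries a2 y - (A + C) * nodeSeries a1 y + C * nodeSeries a0 y.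
Proof.
move=> a1M coef0 coefS.
pose nuSeries := \sum_(n < M.+1) nu n * a1 n * nodeProd y n.
transitivity (nuSeries - \sum_(n < M.+1) a1 n * nodeProd y n.+1).
  rewrite /nodeSeries mulr_sumr -sumrB.
  by apply: eq_bigr => n _; rewrite nodeProdS; ring.
rewrite [X in _ - X]big_ord_recr /= a1M mul0r addr0.
transitivity (\sum_(n < M.+1)
    (A * a2 n - (A + C) * a1 n + C * a0 n) * nodeProd y n); last first.
  rewrite /nodeSeries !mulr_sumr -!sumrB -big_split /=.
  by apply: eq_bigr => n _; ring.
rewrite big_ord_recl /nuSeries big_ord_recl coef0 -addrA; congr (_ + _).
rewrite -sumrB; apply: eq_bigr => m _.
by rewrite coefS //; ring.
Qed.

Lemma nodeSeries_ratio_three_term (T : nat -> nat -> F) (D w : nat -> F)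
    (A C y : F) (i : nat) :
  nu 0 = 0 -> D 0 = 1 -> (forall j, T j 0 = 1) ->
  (forall n, D n.+1 = D n * w n) -> (forall n, (n < M)%N -> D n.+1 != 0) ->
  T i M = 0 ->
  (forall m, (m < M)%N ->
     A * T i.+1 m.+1 - (A + C) * T i m.+1 + C * T i.-1 m.+1
     = nu m.+1 * T i m.+1 - w m * T i m) ->
  let a j n := T j n / D n in
  y * nodeSeries (a i) y
  = A * nodeSeries (a i.+1) y - (A + C) * nodeSeries (a i) y
    + C * nodeSeries (a i.-1) y.
Proof.
move=> nu0 D0 T0 DS D_neq0 TiM numer a.
apply: nodeSeries_three_term => [|| m lt_mM]; rewrite /a.
- by rewrite TiM mul0r.
- by rewrite D0 !T0 nu0; ring.
have := D_neq0 m lt_mM; rewrite DS mulf_eq0 negb_or => /andP[Dm_neq0 wm_neq0].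
transitivity
  ((A * T i.+1 m.+1 - (A + C) * T i m.+1 + C * T i.-1 m.+1) / (D m * w m)).
  by field; rewrite Dm_neq0 wm_neq0.
by rewrite numer //; field; rewrite Dm_neq0 wm_neq0.
Qed.

End NodeSeries.

Lemma three_term_recurrence_eq (A B C f g : nat -> F) (N : nat) :
  f 0 = g 0 ->
  (forall i, (i < N)%N -> A i != 0) ->
  (forall i, (i < N)%N -> A i * f i.+1 = B i * f i - C i * f i.-1) ->
  (forall i, (i < N)%N -> A i * g i.+1 = B i * g i - C i * g i.-1) ->
  forall i, (i <= N)%N -> f i = g i.
Proof.
move=> fg0 A_neq0 recf recg i; elim/ltn_ind: i => -[// | i] IH lt_iN.
apply: (mulfI (A_neq0 i lt_iN)); rewrite recf // recg //.
have le_iN := ltnW lt_iN; have le_pred_i := leq_pred i.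
by rewrite (IH i) // (IH i.-1) // ?(leq_trans le_pred_i).
Qed.

End ThreeTermRecurrence.

Lemma poly_eq_on_points (F : idomainType) (p q : {poly F}) (xs : seq F) :
  uniq xs -> (size p <= size xs)%N -> (size q <= size xs)%N ->
  {in xs, forall x, p.[x] = q.[x]} -> p = q.
Proof.
move=> xs_uniq size_p size_q pq_xs; apply/eqP; rewrite -subr_eq0; apply/eqP.
apply: (roots_geq_poly_eq0 (rs := xs)) => //.
  by apply/allP => x x_xs; rewrite rootE hornerD hornerN pq_xs // subrr.
by rewrite (leq_trans (size_polyD _ _)) // size_polyN geq_max size_p.
Qed.

Lemma size_racahPoly (R : realType) (al be ga de : R) (i : nat) :
  (size (racahPoly al be ga de i) <= i.+1)%N.
Proof.
rewrite /racahPoly (leq_trans (size_sum _ _ _)) //; apply/bigmax_leqP => k _.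
rewrite (leq_trans (size_scale_leq _ _)) // (leq_trans (size_poly_prod_leq _ _)) //.
under eq_bigr do rewrite -opprB size_polyN size_XsubC.
rewrite sum_nat_const card_ord muln2; have := ltn_ord k; lia.
Qed.

Section DualHahnRacah.
Variables (R : realType) (d : nat) (r : R).

Lemma theta_opp i : theta d r (- r) i = (d%:R - i%:R) * (d%:R - i%:R + 1).
Proof. by rewrite /theta; ring. Qed.

Lemma theta_opp_inj a b : (a <= d)%N -> (b <= d)%N ->
  theta d r (- r) a = theta d r (- r) b -> a = b.
Proof.
rewrite !theta_opp -!(ler_nat R) => le_ad le_bd theta_ab.
have : (a%:R - b%:R : R) * (a%:R + b%:R - 2 * d%:R - 1)
    = (d%:R - a%:R) * (d%:R - a%:R + 1) - (d%:R - b%:R) * (d%:R - b%:R + 1).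
  by ring.
rewrite theta_ab subrr => /eqP; rewrite mulf_eq0 => /orP[|/eqP ?]; last by exfalso; lra.
by rewrite subr_eq0 eqr_nat => /eqP.
Qed.

Lemma theta_double j :
  theta d r (- r) (2 * j) = (d%:R - 2 * j%:R) * (d%:R - 2 * j%:R + 1).
Proof. by rewrite theta_opp natrM. Qed.

Lemma theta_reflect j : (j <= d)%N ->
  theta d r (- r) (2 * (d - j) + 1) = (d%:R - 2 * j%:R) * (d%:R - 2 * j%:R + 1).
Proof. by move=> le_jd; rewrite theta_opp natrD natrM natrB //; ring. Qed.

Lemma theta_double_or_reflect i : (i <= d)%N -> exists2 j, (j <= d)%N &
  (d%:R - 2 * j%:R) * (d%:R - 2 * j%:R + 1) = theta d r (- r) i.
Proof.
move=> le_id; have := odd_double_half i; rewrite -muln2.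
case: (odd i) => /= i_eq.
  exists (d - i./2)%N; first by lia.
  by rewrite -theta_reflect; [congr (theta _ _ _ _); lia | lia].
exists i./2; first by lia.
by rewrite -theta_double; congr (theta _ _ _ _); lia.
Qed.

Definition dualHahnNode (n : nat) : R := n%:R * (n%:R - 2 * d%:R - 1).
Definition dualHahnNumer (i n : nat) : R := rfact (- i%:R) n.
Definition dualHahnStep (n : nat) : R := (r - d%:R + n%:R) * (- d%:R + n%:R) * n.+1%:R.
Definition recA (i : nat) : R := (i%:R + r - d%:R) * (i%:R - d%:R).
Definition recC (i : nat) : R := i%:R * (i%:R + r).

Lemma dualHahnNumer_rec i m :
  recA i * dualHahnNumer i.+1 m.+1 - (recA i + recC i) * dualHahnNumer i m.+1
    + recC i * dualHahnNumer i.-1 m.+1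
  = dualHahnNode m.+1 * dualHahnNumer i m.+1 - dualHahnStep m * dualHahnNumer i m.
Proof.
have down : recC i * dualHahnNumer i.-1 m.+1 = - (i%:R + r) * rfact (- i%:R) m.+2.
  by rewrite /recC mulrAC natr_rfact_oppn_pred; ring.
rewrite down /dualHahnNumer rfact_oppnS !rfactS /recA /recC /dualHahnNode /dualHahnStep -!natr1.
ring.
Qed.

Definition alpha : R := - d%:R - 1.
Definition beta : R := r.
Definition gamma : R := (r - d%:R - 1) / 2.
Definition delta : R := - ((r + d%:R) / 2) - 1.

Definition racahNode (n : nat) : R := n%:R * (n%:R + gamma + delta + 1).
Definition racahNumer (i n : nat) : R :=
  rfact (- i%:R) n * rfact (i%:R + alpha + beta + 1) n.
Definition racahStep (n : nat) : R :=
  (alpha + 1 + n%:R) * (beta + delta + 1 + n%:R) * (gamma + 1 + n%:R) * n.+1%:R.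

Lemma racahNumer_rec i m :
  recA i / 4 * racahNumer i.+1 m.+1 - (recA i / 4 + recC i / 4) * racahNumer i m.+1
    + recC i / 4 * racahNumer i.-1 m.+1
  = racahNode m.+1 * racahNumer i m.+1 - racahStep m * racahNumer i m.
Proof.
set c := i%:R + alpha + beta + 1.
have down : recC i * racahNumer i.-1 m.+1
    = - (i%:R + r) * rfact (- i%:R) m.+2 * ((c - 1) * rfact c m).
  rewrite /recC mulrAC /racahNumer mulrA natr_rfact_oppn_pred.
  case: i @c => [|i] c; first by rewrite rfact_oppn_eq0 //; ring.
  have -> : i.+1.-1%:R + alpha + beta + 1 = c - 1 by rewrite /c -natr1; ring.
  by rewrite (rfactSl (c - 1)) subrK; ring.
have up : recA i * racahNumer i.+1 m.+1
    = (i%:R - d%:R) * - i.+1%:R * rfact (- i%:R) m * (c * rfact (c + 1) m.+1).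
  have -> : recA i = c * (i%:R - d%:R) by rewrite /recA /c /alpha /beta; ring.
  rewrite /racahNumer.
  have -> : i.+1%:R + alpha + beta + 1 = c + 1 by rewrite /c -natr1; ring.
  by rewrite rfact_oppnS; ring.
rewrite [recA i / 4 * _]mulrAC [recC i / 4 * _]mulrAC up down /racahNumer -/c rfact_shiftS !rfactS.
rewrite /racahNode /racahStep /recA /recC /c /alpha /beta /gamma /delta -!natr1.
by field.
Qed.

Definition dualHahnDenom (n : nat) : R := rfact (r - d%:R) n * rfact (- d%:R) n * (n`!)%:R.
Definition racahDenom (n : nat) : R :=
  rfact (alpha + 1) n * rfact (beta + delta + 1) n * rfact (gamma + 1) n * (n`!)%:R.

Lemma dualHahnDenomS n : dualHahnDenom n.+1 = dualHahnDenom n * dualHahnStep n.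
Proof. by rewrite /dualHahnDenom /dualHahnStep !rfactS factS natrM; ring. Qed.

Lemma racahDenomS n : racahDenom n.+1 = racahDenom n * racahStep n.
Proof. by rewrite /racahDenom /racahStep !rfactS factS natrM; ring. Qed.

Section NonIntegerParameter.
Hypotheses (r_gtN1 : -1 < r) (r_lt1 : r < 1) (r_neq0 : r != 0).

(* [lra] ignores section hypotheses, so they are restated with [have] where needed. *)
Local Ltac nonzero :=
  have := r_gtN1; have := r_lt1 => ? ?;
  repeat (apply/andP; split); apply/eqP => ?;
  first [lra | apply: (elimN eqP r_neq0); lra].

Lemma addr_nat_neq p q : r + p%:R != q%:R.
Proof.
apply/eqP => rpq; have := r_gtN1; have := r_lt1 => ? ?.
have lt_pq : (p < q.+1)%N by rewrite -(ltr_nat R) -natr1; lra.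
have lt_qp : (q < p.+1)%N by rewrite -(ltr_nat R) -natr1; lra.
have eq_pq : p = q by lia.
by move/eqP: r_neq0; apply; rewrite eq_pq in rpq; lra.
Qed.

Lemma dualHahnDenom_neq0 n : (n < d)%N -> dualHahnDenom n.+1 != 0.
Proof.
move=> lt_nd; have := r_lt1 => ?.
have le_kd k : (k < n.+1)%N -> k%:R + 1 <= d%:R :> R.
  by move=> lt_kn; rewrite natr1 ler_nat (leq_trans lt_kn).
by rewrite !mulf_neq0 ?natr_fact_neq0 //; apply: rfact_neq0 => k /le_kd ?;
  apply/eqP; lra.
Qed.

Lemma racahDenom_neq0 n : (n < d)%N -> racahDenom n.+1 != 0.
Proof.
move=> lt_nd; rewrite !mulf_neq0 ?natr_fact_neq0 //; apply: rfact_neq0 => k lt_kn.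
- have: k%:R + 1 <= d%:R :> R by rewrite natr1 ler_nat (leq_trans lt_kn).
  by rewrite /alpha => ?; apply/eqP; lra.
- have := addr_nat_neq (2 * k) d; rewrite natrM /beta /delta.
  by apply/contra_neq => ?; lra.
- have := addr_nat_neq (2 * k + 1) d; rewrite natrD natrM /gamma.
  by apply/contra_neq => ?; lra.
Qed.

Lemma recA_neq0 i : (i < d)%N -> recA i != 0.
Proof.
move=> lt_id; have := r_lt1; have: (i.+1 <= d)%N by [].
rewrite -(ler_nat R) -natr1 => ? ?.
by rewrite mulf_neq0 //; apply/eqP; lra.
Qed.

Definition dualHahnSeries (i : nat) : R -> R :=
  nodeSeries dualHahnNode d (fun n => dualHahnNumer i n / dualHahnDenom n).
Definition racahSeries (i : nat) : R -> R :=
  nodeSeries racahNode d (fun n => racahNumer i n / racahDenom n).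

Lemma dualHahnSeries0 z : dualHahnSeries 0 z = 1.
Proof.
apply: nodeSeries_const => [|n]; first by rewrite /dualHahnNumer /dualHahnDenom !rfact0 fact0 !mulr1 divr1.
by rewrite /dualHahnNumer rfact_oppn_eq0 ?mul0r.
Qed.

Lemma racahSeries0 y : racahSeries 0 y = 1.
Proof.
apply: nodeSeries_const => [|n]; first by rewrite /racahNumer /racahDenom !rfact0 fact0 !mulr1 divr1.
by rewrite /racahNumer rfact_oppn_eq0 ?mul0r.
Qed.

Lemma dualHahnSeries_rec i z : (i < d)%N ->
  z * dualHahnSeries i z = recA i * dualHahnSeries i.+1 z
    - (recA i + recC i) * dualHahnSeries i z + recC i * dualHahnSeries i.-1 z.
Proof.
move=> lt_id; apply: (nodeSeries_ratio_three_term (w := dualHahnStep)).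
- by rewrite /dualHahnNode mul0r.
- by rewrite /dualHahnDenom !rfact0 fact0 !mul1r.
- by move=> j; rewrite /dualHahnNumer rfact0.
- exact: dualHahnDenomS.
- exact: dualHahnDenom_neq0.
- exact: rfact_oppn_eq0.
- by move=> m _; rewrite dualHahnNumer_rec.
Qed.

Lemma racahSeries_rec i y : (i < d)%N ->
  y * racahSeries i y = recA i / 4 * racahSeries i.+1 y
    - (recA i / 4 + recC i / 4) * racahSeries i y + recC i / 4 * racahSeries i.-1 y.
Proof.
move=> lt_id; apply: (nodeSeries_ratio_three_term (w := racahStep)).
- by rewrite /racahNode mul0r.
- by rewrite /racahDenom !rfact0 fact0 !mul1r.
- by move=> j; rewrite /racahNumer !rfact0 mulr1.
- exact: racahDenomS.
- exact: racahDenom_neq0.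
- by rewrite /racahNumer rfact_oppn_eq0 ?mul0r.
- by move=> m _; rewrite racahNumer_rec.
Qed.

Lemma dualHahnSeries_racah i y : (i <= d)%N ->
  dualHahnSeries i (4 * y) = racahSeries i y.
Proof.
move: i; apply: (three_term_recurrence_eq (A := recA) (C := recC)
  (B := fun i => 4 * y + recA i + recC i)
  (f := fun i => dualHahnSeries i (4 * y)) (g := fun i => racahSeries i y)).
- by rewrite /= dualHahnSeries0 racahSeries0.
- exact: recA_neq0.
- move=> j /(dualHahnSeries_rec (4 * y)) rec /=.
  by rewrite [in RHS]mulrDl [in RHS]mulrDl rec; ring.
- move=> j /(racahSeries_rec y) rec /=.
  by rewrite [in RHS]mulrDl [in RHS]mulrDl -[4 * y * _]mulrA rec; field.
Qed.

Lemma dualHahnF_series i j : (i <= d)%N ->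
  dualHahnF d r (- r) i j
  = dualHahnSeries i (theta d r (- r) j - d%:R * (d%:R + 1)).
Proof.
move=> le_id; rewrite /dualHahnSeries (nodeSeries_trunc _ _ le_id) => [|n lt_in]; last first.
  by rewrite /dualHahnNumer rfact_oppn_eq0 ?mul0r.
apply: eq_bigr => n _; rewrite /dualHahnNumer /dualHahnDenom opprK.
have prodE : nodeProd dualHahnNode (theta d r (- r) j - d%:R * (d%:R + 1)) n
    = rfact (- j%:R) n * rfact (j%:R - r + r - 2 * d%:R - 1) n.
  by rewrite /rfact -big_split; apply: eq_bigr => k _ /=; rewrite /dualHahnNode /theta; ring.
by rewrite prodE; ring.
Qed.

Lemma racahPoly_horner i y : (i <= d)%N ->
  (racahPoly alpha beta gamma delta i).[y] = racahSeries i y.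
Proof.
move=> le_id; rewrite /racahSeries (nodeSeries_trunc _ _ le_id) => [|n lt_in]; last first.
  by rewrite /racahNumer rfact_oppn_eq0 ?mul0r.
rewrite /racahPoly horner_sum; apply: eq_bigr => k _; rewrite hornerZ horner_prod; congr (_ * _).
by apply: eq_bigr => l _; rewrite hornerD hornerN hornerC hornerX.
Qed.

Lemma dualHahn_comp_racah i (u : {poly R}) : (i <= d)%N -> (size u <= d.+1)%N ->
  (forall j, (j <= d)%N -> u.[theta d r (- r) j] = dualHahnF d r (- r) i j) ->
  u \Po (4%:P * 'X + (d%:R * (d%:R + 1))%:P) = racahPoly alpha beta gamma delta i.
Proof.
move=> le_id size_u u_theta; set q := _ + _.
pose y j := (theta d r (- r) j - d%:R * (d%:R + 1)) / 4.
have q_y j : q.[y j] = theta d r (- r) j.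
  by rewrite /q hornerD mul_polyC hornerZ hornerX hornerC /y; field.
have size_q : (size q <= 2)%N.
  rewrite (leq_trans (size_polyD _ _)) // geq_max (leq_trans (size_polyC_leq1 _)) //.
  by rewrite andbT mul_polyC (leq_trans (size_scale_leq _ _)) // size_polyX.
apply: (poly_eq_on_points (xs := map y (iota 0 d.+1))).
- rewrite map_inj_in_uniq ?iota_uniq // => a b; rewrite !mem_iota !ltnS => le_ad le_bd.
  by move/(congr1 (horner q)); rewrite !q_y; apply: theta_opp_inj.
- rewrite size_map size_iota (leq_trans (size_comp_poly_leq _ _)) // ltnS -[d]muln1.
  by apply: leq_mul; rewrite -subn1 leq_subLR.
- by rewrite size_map size_iota (leq_trans (size_racahPoly _ _ _ _ _)).
move=> x /mapP[j]; rewrite mem_iota ltnS => le_jd ->.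
rewrite horner_comp q_y u_theta // dualHahnF_series // racahPoly_horner //.
by rewrite -dualHahnSeries_racah // /y [4 * _]mulrC divfK ?pnatr_eq0.
Qed.

Lemma bstar_opp i : (i < d)%N -> bstar d r (- r) i
  = (i%:R - d%:R + r) * (2 * d%:R - i%:R + 1) / (2 * (2 * d%:R - 2 * i%:R + 1)).
Proof.
rewrite -(ltr_nat R) => lt_id; have := ler0n R i => ?.
rewrite /bstar; set x := 2 * d%:R - 2 * i%:R + r + - r.
have x_gt0 : 0 < x by rewrite /x; lra.
have rfact_x_neq0 : rfact x i.+1 != 0.
  by apply: rfact_neq0 => k _; rewrite gt_eqF // (lt_le_trans x_gt0) // lerDl.
have ratio : rfact (x + 2) i = rfact x i.+1 * (x + i.+1%:R) / (x * (x + 1)).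
  have x_x1_neq0 : x * (x + 1) != 0 by rewrite mulf_neq0 //; apply/eqP; lra.
  by apply: (mulfI x_x1_neq0); rewrite rfact_shift2 [RHS]mulrC divfK.
rewrite ratio /x -natr1; field.
by nonzero.
Qed.

Lemma cstar_opp i : (i < d)%N -> cstar d r (- r) i.+1
  = i.+1%:R * (i.+1%:R - d%:R - r - 1) / (2 * (2 * d%:R - 2 * i.+1%:R + 1)).
Proof.
move=> lt_id; have le_i1d : i%:R + 1 <= d%:R :> R by rewrite natr1 ler_nat.
rewrite /cstar -mulrA; set n := (d - i.+1)%N.
set y := d%:R - i.+1%:R + r + - r + 1.
have -> : d%:R - i.+1%:R + r + - r + 2 = y + 1 by rewrite /y; ring.
have y_eq : y = n%:R + 1 by rewrite /y /n natrB //; ring.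
have n_ge0 := ler0n R n.
have rfact_y1_neq0 : rfact (y + 1) n.+1 != 0.
  by apply: rfact_neq0 => k _; have := ler0n R k; rewrite y_eq => ?; apply/eqP; lra.
have ratio : rfact y n / rfact (y + 1) n.+1 = y / ((y + n%:R) * (y + n%:R + 1)).
  have yn_neq0 : (y + n%:R) * (y + n%:R + 1) != 0.
    by rewrite y_eq mulf_neq0 //; apply/eqP; lra.
  by apply/eqP; rewrite eqr_div // rfact_shiftS mulrA.
rewrite ratio y_eq /n natrB // -!natr1; field.
by nonzero.
Qed.

Definition kstarRatio (i : nat) : R := bstar d r (- r) i / cstar d r (- r) i.+1.
Definition kbarRatio (j : nat) : R := bbar d r j / cbar d r j.+1.

Lemma kstarS i : kstar d r (- r) i.+1 = kstar d r (- r) i * kstarRatio i.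
Proof. by rewrite /kstar /kstarRatio !big_ord_recr /= invfM; ring. Qed.

Lemma kbarS j : kbar d r j.+1 = kbar d r j * kbarRatio j.
Proof. by rewrite /kbar /kbarRatio !big_ord_recr /= invfM; ring. Qed.

Lemma kbarRatio_low j : (2 * j + 2 <= d)%N ->
  kbarRatio j = kstarRatio (2 * j) * kstarRatio (2 * j).+1.
Proof.
move=> le_jd; have lt_2j : (2 * j < d)%N by lia.
have lt_2j1 : ((2 * j).+1 < d)%N by lia.
rewrite /kstarRatio !bstar_opp // !cstar_opp // /kbarRatio /bbar /cbar.
have [e ->] : exists e, d = (2 * j + 2 + e)%N by exists (d - (2 * j + 2))%N; lia.
have := ler0n R j; have := ler0n R e => ? ?.
rewrite -?natr1 ?natrD ?natrM -?natr1; field.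
by nonzero.
Qed.

Lemma kbarRatio_mid_odd j : d = (2 * j + 1)%N -> kbarRatio j = kstarRatio (2 * j).
Proof.
move=> d_odd; have lt_2j : (2 * j < d)%N by lia.
rewrite /kstarRatio bstar_opp // cstar_opp // /kbarRatio /bbar /cbar d_odd.
clear lt_2j d_odd; have := ler0n R j => ?.
rewrite -?natr1 ?natrD ?natrM -?natr1; field.
by nonzero.
Qed.

Lemma kbarRatio_mid_even j : d = (2 * j + 2)%N ->
  kstarRatio (2 * j).+1 * kbarRatio j.+1 = 1.
Proof.
move=> d_even; have lt_2j1 : ((2 * j).+1 < d)%N by lia.
rewrite /kstarRatio bstar_opp // cstar_opp // /kbarRatio /bbar /cbar d_even.
clear lt_2j1 d_even; have := ler0n R j => ?.
rewrite -?natr1 ?natrD ?natrM -?natr1; field.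
by nonzero.
Qed.

Lemma kbarRatio_high j : (d < 2 * j)%N -> (j < d)%N ->
  kstarRatio (2 * (d - j.+1)).+1 * kstarRatio (2 * (d - j.+1)).+2 * kbarRatio j = 1.
Proof.
move=> lt_d2j lt_jd.
have lt_1 : ((2 * (d - j.+1)).+1 < d)%N by lia.
have lt_2 : ((2 * (d - j.+1)).+2 < d)%N by lia.
rewrite /kstarRatio !bstar_opp // !cstar_opp // /kbarRatio /bbar /cbar.
have [e [f [-> ->]]] : exists e f, d = (2 * e + 3 + f)%N /\ j = (e + 2 + f)%N.
  by exists (d - j.+1)%N, (j - (d - j.+1) - 2)%N; lia.
have -> : (2 * e + 3 + f - (e + 2 + f).+1 = e)%N by lia.
have := ler0n R e; have := ler0n R f => ? ?.
rewrite -?natr1 ?natrD ?natrM -?natr1; field.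
by nonzero.
Qed.

Lemma kbar_kstar j : (j <= d)%N ->
  kbar d r j = if (j <= d./2)%N then kstar d r (- r) (2 * j)
               else kstar d r (- r) (2 * (d - j) + 1).
Proof.
elim: j => [|j IH] le_jd; first by rewrite /kbar /kstar !big_ord0.
rewrite kbarS IH; last by lia.
have [le_j1_half | lt_half_j1] := leqP j.+1 d./2.
  rewrite (leq_trans (leqnSn j) le_j1_half) mulnSr addn2 !kstarS -mulrA.
  by rewrite kbarRatio_low //; lia.
have [le_j_half | lt_half_j] := leqP j d./2.
  have [lt_2j_d | le_d_2j] := ltnP (2 * j) d.
    have -> : (2 * (d - j.+1) + 1 = (2 * j).+1)%N by lia.
    by rewrite kstarS kbarRatio_mid_odd //; lia.
  case: j IH le_jd lt_half_j1 le_j_half le_d_2j => [|j] IH le_jd lt_half_j1 le_j_half le_d_2j.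
    by lia.
  have -> : (2 * (d - j.+2) + 1 = (2 * j).+1)%N by lia.
  by rewrite mulnSr addn2 kstarS -mulrA kbarRatio_mid_even ?mulr1 //; lia.
have -> : (2 * (d - j) + 1 = (2 * (d - j.+1)).+3)%N by lia.
have lt_d_2j : (d < 2 * j)%N by lia.
by rewrite addn1 !kstarS -[RHS]mulr1 -(kbarRatio_high lt_d_2j le_jd) !mulrA.
Qed.

End NonIntegerParameter.

End DualHahnRacah.

Theorem theorem1p4 (R : realType) (d : nat) (r s : R) :
  -1 < r -> -1 < s -> r != 0 -> r + s = 0 ->
  let alpha := - d%:R - 1 in
  let beta := r in
  let gamma := (r - d%:R - 1) / 2 in
  let delta := - ((r + d%:R) / 2) - 1 in
  let thetabar (j : nat) := 4 * j%:R * (j%:R + gamma + delta + 1) + d%:R * (d%:R + 1) in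
  [/\ (* (a) u_i(4y + d(d+1)) = R_i(y), where u_i is the (unique) polynomial of
         degree <= d interpolating the dual Hahn values *)
      forall i, (i <= d)%N ->
        forall u : {poly R}, (size u <= d.+1)%N ->
          (forall j, (j <= d)%N -> u.[theta d r s j] = dualHahnF d r s i j) ->
          u \Po (4%:P * 'X + (d%:R * (d%:R + 1))%:P) = racahPoly alpha beta gamma delta i,
      (* (b) *)
      forall j, (j <= d)%N ->
        thetabar j = (d%:R - 2 * j%:R) * (d%:R - 2 * j%:R + 1) /\
        thetabar j = (if (j <= d./2)%N then theta d r s (2 * j)
                      else theta d r s (2 * (d - j) + 1)),
      (forall i, (i <= d)%N -> exists2 j, (j <= d)%N & thetabar j = theta d r s i) /\
      (forall j, (j <= d)%N -> exists2 i, (i <= d)%N & thetabar j = theta d r s i) &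
      (* (c) *)
      forall j, (j <= d)%N ->
        kbar d r j = (if (j <= d./2)%N then kstar d r s (2 * j)
                      else kstar d r s (2 * (d - j) + 1))].
Proof.
move=> r_gtN1 s_gtN1 r_neq0 rs0 alpha beta gamma delta thetabar.
have -> : s = - r by lra.
have r_lt1 : r < 1 by lra.
have thetabarE j : thetabar j = (d%:R - 2 * j%:R) * (d%:R - 2 * j%:R + 1).
  by rewrite /thetabar /gamma /delta; field.
have thetabar_theta j : (j <= d)%N -> thetabar j
    = if (j <= d./2)%N then theta d r (- r) (2 * j) else theta d r (- r) (2 * (d - j) + 1).
  by move=> le_jd; rewrite thetabarE theta_double theta_reflect //; case: ifP.
split.
- by move=> i le_id u; apply: dualHahn_comp_racah.
- by move=> j le_jd; split; [exact: thetabarE | exact: thetabar_theta].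
- split=> [i /(theta_double_or_reflect r)[j le_jd theta_ij] | j le_jd].
    by exists j; rewrite ?thetabarE.
  exists (if (j <= d./2)%N then 2 * j else 2 * (d - j) + 1)%N.
    by case: ifP; lia.
  by rewrite thetabar_theta //; case: ifP.
- exact: kbar_kstar.
Qed.
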